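(* Let $(P,(J_c)_{c\in\mathcal C})$ be an existential doctrinal site and $J_\rtimes$ its existential topology on $\mathcal C\rtimes P$. Then the geometric completion $\mathfrak I(P,J_\rtimes)$ is isomorphic to the point-wise ideal completion of $P$: namely, to the doctrine sending $c\in\mathcal C$ to the frame $J_c\text{-}\mathrm{Idl}(P(c))$ and sending $f:d\to c$ to the map $J_c\text{-}\mathrm{Idl}(P(c))\to J_d\text{-}\mathrm{Idl}(P(d))$, $I\mapsto\{y\in P(d):\exists_f y\in I\}$.
   Context: For a doctrine $P:\mathcal C^{op}\to\mathbf{PreOrd}$, $\mathcal C\rtimes P$ has objects $(c,x)$, $x\in P(c)$, and morphisms $f:(c,x)\to(d,y)$ the $f:c\to d$ in $\mathcal C$ with $x\le P(f)(y)$. Existential doctrinal site: a doctrine $P$ such that for each $f:d\to c$ in $\mathcal C$, $P(f):P(c)\to P(d)$ has a left adjoint $\exists_f:P(d)\to P(c)$, together with a Grothendieck topology $J_c$ on each preorder $P(c)$ (viewed as a category) such that each $\exists_f$ sends $J_d$-covering sieves to $J_c$-covering families, satisfying: (relative Frobenius) for each sieve $S$ on $(d,y)$ in $\mathcal C\rtimes P$ such that $\{\exists_f z\le y: (f:(c,z)\to(d,y))\in S\}$ generates a $J_d$-covering sieve on $y$, and each $x\le y$ in $P(d)$, the family $\{\exists_f z\le x: (f:(c,z)\to(d,y))\in S,\ z\le P(f)(x)\}$ generates a $J_d$-covering sieve on $x$; (relative Beck–Chevalley) for each such $S$ and each $h:e\to d$ in $\mathcal C$, the family $\{\exists_gz\le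 P(h)(y): g:(c,z)\to(e,P(h)(y))\text{ in }\mathcal C\rtimes P,\ h\circ g\in S\}$ generates a $J_e$-covering sieve on $P(h)(y)$. The existential topology $J_\rtimes$ on $\mathcal C\rtimes P$: a sieve $\{f_i:(c_i,x_i)\to(d,y)\}_i$ is $J_\rtimes$-covering iff $\{\exists_{f_i}x_i\le y\}_i$ generates a $J_d$-covering sieve on $y$. For a preorder $Q$ with Grothendieck topology $K$, $K\text{-}\mathrm{Idl}(Q)$ is the frame, ordered by inclusion, of down-sets $I\subseteq Q$ that are $K$-closed: if $\{y_j\le x\}$ generates a $K$-covering sieve on $x$ and all $y_j\in I$ then $x\in I$. Geometric completion $\mathfrak I(P,J)$ for a topology $J$ on $\mathcal C\rtimes P$: $\mathfrak I(P,J)(c)$ is the inclusion-ordered set of sets $S$ of pairs $(f,x)$, $f:d\to c$, $x\in P(d)$ such that (a) $(f,x)\in S$, $g:e\to d$, $y\le P(g)(x)$ imply $(f\circ g,y)\in S$; (b) if $\{h_i:(e_i,y_i)\to(d,x)\}$ is $J$-covering and all $(f\circ h_i,y_i)\in S$ then $(f,x)\in S$; with $\mathfrak I(P,J)(f)(S)=\{(g,y):(f\circ g,y)\in S\}$. *)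

Set Universe Polymorphism.

Record Category := {
  Ob :> Type;
  Hom : Ob -> Ob -> Type;
  cid : forall c, Hom c c;
  comp : forall a b c, Hom b c -> Hom a b -> Hom a c;
  comp_assoc : forall a b c d (h : Hom c d) (g : Hom b c) (f : Hom a b),
      comp a c d h (comp a b c g f) = comp a b d (comp b c d h g) f;
  comp_id_l : forall a b (f : Hom a b), comp a b b (cid b) f = f;
  comp_id_r : forall a b (f : Hom a b), comp a a b f (cid a) = f
}.
Arguments Hom {C} _ _ : rename.
Arguments cid {C} c : rename.
Arguments comp {C a b c} _ _ : rename.

Record Doctrine (C : Category) := {
  Pt : C -> Type;
  ple : forall c, Pt c -> Pt c -> Prop;
  ple_refl : forall c (x : Pt c), ple c x x;
  ple_trans : forall c (x y z : Pt c), ple c x y -> ple c y z -> ple c x z;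
  Pmap : forall d c, @Hom C d c -> Pt c -> Pt d;
  Pmap_mono : forall d c (f : Hom d c) (x y : Pt c),
      ple c x y -> ple d (Pmap d c f x) (Pmap d c f y);
  Pmap_id : forall c (x : Pt c), Pmap c c (cid c) x = x;
  Pmap_comp : forall e d c (f : Hom d c) (g : Hom e d) (x : Pt c),
      Pmap e c (comp f g) x = Pmap e d g (Pmap d c f x)
}.
Arguments Pt {C} P c : rename.
Arguments ple {C P c} _ _ : rename.
Arguments Pmap {C P d c} _ _ : rename.

Section Preorder.
Variables (Q : Type) (le : Q -> Q -> Prop).

Definition is_sieve (x : Q) (S : Q -> Prop) : Prop :=
  (forall z, S z -> le z x) /\ (forall z w, S z -> le w z -> S w).

Definition gen (x : Q) (F : Q -> Prop) : Q -> Prop :=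
  fun z => le z x /\ exists y, F y /\ le z y.

Record Topology := {
  cov :> Q -> (Q -> Prop) -> Prop;
  cov_sieve : forall x S, cov x S -> is_sieve x S;
  cov_max : forall x, cov x (fun z => le z x);
  cov_stab : forall x S y, cov x S -> le y x ->
      cov y (fun z => le z y /\ S z);
  cov_trans : forall x S R, cov x S -> is_sieve x R ->
      (forall y, S y -> cov y (fun z => le z y /\ R z)) -> cov x R
}.

Definition is_ideal (K : Topology) (I : Q -> Prop) : Prop :=
  (forall x y, le y x -> I x -> I y) /\
  (forall x (F : Q -> Prop), (forall y, F y -> le y x) ->
      cov K x (gen x F) -> (forall y, F y -> I y) -> I x).
End Preorder.
Arguments gen {Q} le x F.
Arguments is_sieve {Q} le x S.
Arguments Topology {Q} le.
Arguments cov {Q le} t _ _.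
Arguments is_ideal {Q le} K I.

(* a sieve on (d,y) in C ⋊ P:  S c z f  means  f : (c,z) -> (d,y) is in S *)
Definition rt_sieve (C : Category) (P : Doctrine C) (d : C) (y : Pt P d)
    (S : forall c, Pt P c -> Hom c d -> Prop) : Prop :=
  (forall c z f, S c z f -> ple z (Pmap f y)) /\
  (forall c z f, S c z f -> forall e w (g : Hom e c),
      ple w (Pmap g z) -> S e w (comp f g)).
Arguments rt_sieve {C P d} y S.

Record ExDocSite (C : Category) := {
  doc :> Doctrine C;
  ex : forall d c, @Hom C d c -> Pt doc d -> Pt doc c;
  ex_adj : forall d c (f : Hom d c) (x : Pt doc d) (y : Pt doc c),
      ple (ex d c f x) y <-> ple x (Pmap f y);
  top : forall c, Topology (@ple C doc c);
  ex_cov : forall d c (f : Hom d c) (y : Pt doc d) (S : Pt doc d -> Prop),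
      cov (top d) y S ->
      cov (top c) (ex d c f y)
        (gen ple (ex d c f y) (fun u => exists z, S z /\ u = ex d c f z));
  rel_frob : forall d (y : Pt doc d) S,
      rt_sieve y S ->
      cov (top d) y (gen ple y (fun u => exists c z (f : Hom c d),
                                   S c z f /\ u = ex c d f z)) ->
      forall x, ple x y ->
      cov (top d) x (gen ple x (fun u => exists c z (f : Hom c d),
                   S c z f /\ ple z (Pmap f x) /\ u = ex c d f z));
  rel_bc : forall d (y : Pt doc d) S,
      rt_sieve y S ->
      cov (top d) y (gen ple y (fun u => exists c z (f : Hom c d),
                                   S c z f /\ u = ex c d f z)) ->
      forall e (h : Hom e d),
      cov (top e) (Pmap h y) (gen ple (Pmap h y) (fun u => exists c z (g : Hom c e),
             ple z (Pmap g (Pmap h y)) /\ S c z (comp h g) /\ u = ex c e g z))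
}.
Arguments doc {C} _.
Arguments ex {C s d c} _ _ : rename.
Arguments top {C} s c : rename.

Definition J_rtimes (C : Category) (E : ExDocSite C) (d : C) (y : Pt E d)
    (S : forall c, Pt E c -> Hom c d -> Prop) : Prop :=
  cov (top E d) y (gen ple y (fun u => exists c z (f : Hom c d),
                                 S c z f /\ u = ex f z)).
Arguments J_rtimes {C} E d y S.

Definition GSet (C : Category) (P : Doctrine C) (c : C) :=
  forall d, Hom d c -> Pt P d -> Prop.
Arguments GSet {C} P c.

(* S belongs to I(P,J)(c); J = covering predicate on sieves of C ⋊ P *)
Definition is_geom (C : Category) (P : Doctrine C)
    (J : forall d (y : Pt P d), (forall e, Pt P e -> Hom e d -> Prop) -> Prop)
    (c : C) (S : GSet P c) : Prop :=
  (forall d (f : Hom d c) x, S d f x ->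
      forall e (g : Hom e d) y, ple y (Pmap g x) -> S e (comp f g) y) /\
  (forall d (f : Hom d c) x (R : forall e, Pt P e -> Hom e d -> Prop),
      rt_sieve x R -> J d x R ->
      (forall e y h, R e y h -> S e (comp f h) y) -> S d f x).
Arguments is_geom {C P} J {c} S.

Definition geom_map (C : Category) (P : Doctrine C) (d c : C) (f : Hom d c)
    (S : GSet P c) : GSet P d :=
  fun e g y => S e (comp f g) y.
Arguments geom_map {C P d c} f S.

Definition ideal_map (C : Category) (E : ExDocSite C) (d c : C) (f : Hom d c)
    (I : Pt E c -> Prop) : Pt E d -> Prop :=
  fun y => I (ex f y).
Arguments ideal_map {C E d c} f I.

Definition gsub (C : Category) (P : Doctrine C) c (S T : GSet P c) :=
  forall d f x, S d f x -> T d f x.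
Definition geq (C : Category) (P : Doctrine C) c (S T : GSet P c) :=
  forall d f x, S d f x <-> T d f x.
Arguments gsub {C P c} S T.
Arguments geq {C P c} S T.
Definition psub (A : Type) (I K : A -> Prop) := forall a, I a -> K a.
Definition peq (A : Type) (I K : A -> Prop) := forall a, I a <-> K a.
Arguments psub {A} I K.
Arguments peq {A} I K.

(* The key observation is that a J_rtimes-closed geometric set S over c is
   determined by its fiber at the identity:  (f, x) is in S  iff  (1_c, ∃_f x)
   is in S.  Indeed f : (d, x) -> (c, ∃_f x) is a morphism of C ⋊ P, and the
   sieve it generates is J_rtimes-covering because ∃_f x is its own ∃-image. *)
From Stdlib Require Import FunctionalExtensionality PropExtensionality.

Section CoveringSieves.
Variables (Q : Type) (le : Q -> Q -> Prop) (K : Topology le).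

Lemma cov_ext x (S R : Q -> Prop) :
  cov K x S -> (forall z, S z <-> R z) -> cov K x R.
Proof.
  intros HS HSR. replace R with S; auto.
  apply functional_extensionality; intro z; apply propositional_extensionality; auto.
Qed.

Lemma cov_up x (S R : Q -> Prop) :
  cov K x S -> is_sieve le x R -> (forall z, S z -> R z) -> cov K x R.
Proof.
  intros HS HR Inc. apply (cov_trans _ _ K x S R HS HR).
  intros y Sy. apply (cov_ext y _ _ (cov_max _ _ K y)).
  intro z; split; [intro Hz; split; auto | intros [Hz _]; auto].
  apply (proj2 HR y z); auto.
Qed.

Hypothesis le_trans : forall x y z, le x y -> le y z -> le x z.

Lemma gen_sieve x (F : Q -> Prop) : is_sieve le x (gen le x F).
Proof.
  split; [intros z [H _]; exact H |].
  intros z w [Hzx [y [Fy Hzy]]] Hwz. split; [eauto |].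
  exists y; split; eauto.
Qed.

Lemma cov_of_max x (R : Q -> Prop) :
  is_sieve le x R -> (forall z, le z x -> R z) -> cov K x R.
Proof. intros HR Inc. exact (cov_up x _ R (cov_max _ _ K x) HR Inc). Qed.
End CoveringSieves.

Arguments cov_up {Q le} K x S R.
Arguments cov_of_max {Q le} K x R.
Arguments gen_sieve {Q le} le_trans x F.

Section IdealCompletion.
Variables (C : Category) (E : ExDocSite C).

Local Notation le_trans := (@ple_trans C E _).

Lemma ex_unit d c (f : Hom d c) (x : Pt E d) : ple x (Pmap f (ex f x)).
Proof. apply (proj1 (ex_adj _ E _ _ f x _)), ple_refl. Qed.

Lemma ex_transpose d c (f : Hom d c) (x : Pt E d) (y : Pt E c) :
  ple x (Pmap f y) -> ple (ex f x) y.
Proof. apply (proj2 (ex_adj _ E _ _ f x y)). Qed.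

Lemma ex_mono d c (f : Hom d c) (x x' : Pt E d) : ple x x' -> ple (ex f x) (ex f x').
Proof. intro H. apply ex_transpose. eapply le_trans; [exact H | apply ex_unit]. Qed.

Lemma ex_comp_le e d c (f : Hom d c) (g : Hom e d) (y : Pt E e) :
  ple (ex (comp f g) y) (ex f (ex g y)).
Proof.
  apply ex_transpose. rewrite Pmap_comp.
  eapply le_trans; [apply (ex_unit _ _ g) | apply Pmap_mono, ex_unit].
Qed.

Lemma ex_comp_ge e d c (f : Hom d c) (g : Hom e d) (y : Pt E e) :
  ple (ex f (ex g y)) (ex (comp f g) y).
Proof. apply ex_transpose, ex_transpose. rewrite <- Pmap_comp. apply ex_unit. Qed.

Lemma ex_id_le c (x : Pt E c) : ple (ex (cid c) x) x.
Proof. apply ex_transpose. rewrite Pmap_id. apply ple_refl. Qed.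

Lemma ex_id_ge c (x : Pt E c) : ple x (ex (cid c) x).
Proof. pose proof (ex_unit _ _ (cid c) x) as H. rewrite Pmap_id in H. exact H. Qed.

Definition arrow_sieve d c (f : Hom d c) (x : Pt E d) :
    forall e, Pt E e -> Hom e c -> Prop :=
  fun e y h => exists g : Hom e d, h = comp f g /\ ple y (Pmap g x).

Lemma arrow_sieve_rt d c (f : Hom d c) (x : Pt E d) :
  rt_sieve (ex f x) (arrow_sieve d c f x).
Proof.
  split.
  - intros e z h [g [-> Hz]]. rewrite Pmap_comp.
    eapply le_trans; [exact Hz | apply Pmap_mono, ex_unit].
  - intros e z h [g [-> Hz]] e' w g' Hw. exists (comp g g'). split.
    + symmetry; apply comp_assoc.
    + rewrite Pmap_comp. eapply le_trans; [exact Hw | apply Pmap_mono; exact Hz].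
Qed.

(* It covers, since the ∃-image of its generator is the whole of ∃_f x. *)
Lemma arrow_sieve_covers d c (f : Hom d c) (x : Pt E d) :
  J_rtimes E c (ex f x) (arrow_sieve d c f x).
Proof.
  apply cov_of_max; [apply (gen_sieve le_trans) |].
  intros z Hz. split; auto. exists (ex f x). split; [| auto].
  exists d, x, f. split; auto. exists (cid d). split.
  - symmetry; apply comp_id_r.
  - rewrite Pmap_id; apply ple_refl.
Qed.

Definition family_sieve c (F : Pt E c -> Prop) : forall e, Pt E e -> Hom e c -> Prop :=
  fun e z h => exists y, F y /\ ple z (Pmap h y).

Lemma family_sieve_rt c (x : Pt E c) (F : Pt E c -> Prop) :
  (forall y, F y -> ple y x) -> rt_sieve x (family_sieve c F).
Proof.
  intro HF. split.
  - intros e z h [y [Fy Hz]]. eapply le_trans; [exact Hz | apply Pmap_mono; auto].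
  - intros e z h [y [Fy Hz]] e' w g Hw. exists y. split; auto.
    rewrite Pmap_comp. eapply le_trans; [exact Hw | apply Pmap_mono; auto].
Qed.

Lemma family_sieve_covers c (x : Pt E c) (F : Pt E c -> Prop) :
  cov (top E c) x (gen ple x F) -> J_rtimes E c x (family_sieve c F).
Proof.
  intro Hcov. apply (cov_up _ _ _ _ Hcov (gen_sieve le_trans _ _)).
  intros z [Hzx [y [Fy Hzy]]]. split; auto. exists (ex (cid c) y). split.
  - exists c, y, (cid c). split; auto. exists y. split; auto.
    rewrite Pmap_id; apply ple_refl.
  - eapply le_trans; [exact Hzy | apply ex_id_ge].
Qed.

Lemma geom_fiber c (S : GSet E c) : is_geom (J_rtimes E) S ->
  forall d (f : Hom d c) x, S d f x <-> S c (cid c) (ex f x).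
Proof.
  intros [Hdown Hclosed] d f x. split.
  - intro Hs.
    apply (Hclosed c (cid c) (ex f x) _ (arrow_sieve_rt d c f x) (arrow_sieve_covers d c f x)).
    intros e y h [g [-> Hy]]. rewrite comp_id_l. apply Hdown with (x := x); auto.
  - intro Hs. rewrite <- (comp_id_l _ _ _ f).
    apply Hdown with (x := ex f x); [exact Hs | apply ex_unit].
Qed.

Definition fiber c (S : GSet E c) : Pt E c -> Prop := fun x => S c (cid c) x.

Definition extension c (I : Pt E c -> Prop) : GSet E c := fun d f x => I (ex f x).

Lemma fiber_is_ideal c (S : GSet E c) :
  is_geom (J_rtimes E) S -> is_ideal (top E c) (fiber c S).
Proof.
  intros [Hdown Hclosed]. split.
  - intros x y Hyx Hx. unfold fiber. rewrite <- (comp_id_l _ _ _ (cid c)).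
    apply Hdown with (x := x); auto. rewrite Pmap_id; auto.
  - intros x F HF Hcov HI.
    apply (Hclosed c (cid c) x _ (family_sieve_rt c x F HF) (family_sieve_covers c x F Hcov)).
    intros e z h [y [Fy Hz]]. rewrite comp_id_l, <- (comp_id_l _ _ _ h).
    apply Hdown with (x := y); [apply HI; exact Fy | exact Hz].
Qed.

Lemma extension_is_geom c (I : Pt E c -> Prop) :
  is_ideal (top E c) I -> is_geom (J_rtimes E) (extension c I).
Proof.
  intros [Hdown Hclosed]. split.
  - intros d f x Hx e g y Hy. apply Hdown with (x := ex f x); auto.
    eapply le_trans; [apply ex_comp_le | apply ex_mono, ex_transpose, Hy].
  - intros d f x R HR HJ HRI.
    (* ∃_f carries the J_d-cover of x witnessing HJ to a J_c-cover of ∃_f x,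
       all of whose members lie below some ∃_{f∘h} y with h ∈ R. *)
    eapply Hclosed; [| exact (ex_cov _ E _ _ f _ _ HJ) |].
    + intros u [z [[Hzx _] ->]]. apply ex_mono; auto.
    + intros u [z [[_ [v [[e [y [h [Rh ->]]]] Hzv]]] ->]].
      apply Hdown with (x := ex (comp f h) y); [| apply HRI; exact Rh].
      eapply le_trans; [apply ex_mono; exact Hzv | apply ex_comp_ge].
Qed.

Lemma extension_fiber c (S : GSet E c) :
  is_geom (J_rtimes E) S -> geq (extension c (fiber c S)) S.
Proof. intros HS d f x. symmetry. apply geom_fiber; auto. Qed.

Lemma fiber_extension c (I : Pt E c -> Prop) :
  is_ideal (top E c) I -> peq (fiber c (extension c I)) I.
Proof.
  intros [Hdown _] x. unfold fiber, extension. split; intro H.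
  - apply Hdown with (x := ex (cid c) x); auto. apply ex_id_ge.
  - apply Hdown with (x := x); auto. apply ex_id_le.
Qed.

Lemma fiber_natural d c (f : Hom d c) (S : GSet E c) :
  is_geom (J_rtimes E) S -> peq (fiber d (geom_map f S)) (ideal_map f (fiber c S)).
Proof.
  intros HS y. unfold fiber, geom_map, ideal_map. rewrite comp_id_r.
  apply geom_fiber; auto.
Qed.
End IdealCompletion.

Arguments fiber {C} E c S.
Arguments extension {C} E c I.

Theorem proposition5p5 (C : Category) (E : ExDocSite C) :
  exists (phi : forall c : C, GSet E c -> (Pt E c -> Prop))
         (psi : forall c : C, (Pt E c -> Prop) -> GSet E c),
    (* phi_c, psi_c are maps between I(P,J_rtimes)(c) and J_c-Idl(P(c)) *)
    (forall c (S : GSet E c), is_geom (J_rtimes E) S -> is_ideal (top E c) (phi c S)) /\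
    (forall c (I : Pt E c -> Prop), is_ideal (top E c) I -> is_geom (J_rtimes E) (psi c I)) /\
    (* both are monotone for inclusion *)
    (forall c (S T : GSet E c), is_geom (J_rtimes E) S -> is_geom (J_rtimes E) T ->
        gsub S T -> psub (phi c S) (phi c T)) /\
    (forall c (I K : Pt E c -> Prop), is_ideal (top E c) I -> is_ideal (top E c) K ->
        psub I K -> gsub (psi c I) (psi c K)) /\
    (* mutually inverse *)
    (forall c (S : GSet E c), is_geom (J_rtimes E) S -> geq (psi c (phi c S)) S) /\
    (forall c (I : Pt E c -> Prop), is_ideal (top E c) I -> peq (phi c (psi c I)) I) /\
    (* natural in c *)
    (forall d c (f : Hom d c) (S : GSet E c), is_geom (J_rtimes E) S ->
        peq (phi d (geom_map f S)) (ideal_map f (phi c S))).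
Proof.
  exists (fiber E), (extension E).
  split; [exact (fiber_is_ideal C E) |].
  split; [exact (extension_is_geom C E) |].
  (* both maps are restrictions of predicates, hence monotone *)
  split; [intros c S T _ _ Hsub x; apply Hsub |].
  split; [intros c I K _ _ Hsub d f x; apply Hsub |].
  split; [exact (extension_fiber C E) |].
  split; [exact (fiber_extension C E) |].
  exact (fiber_natural C E).
Qed.
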